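(* Let $A=(a_{ij})_{1\le i,j\le n}$ be a complex Nekrasov matrix. Then there exist real numbers $\epsilon_1,\dots,\epsilon_n$ satisfying $$\epsilon_1>0,\qquad 0<\epsilon_i\le |a_{ii}|-h_i(A)\ \text{ and }\ \epsilon_i>\sum_{j=1}^{i-1}\frac{|a_{ij}|\,\epsilon_j}{|a_{jj}|}\quad\text{for } i=2,\dots,n,$$ and for any such numbers the diagonal matrix $$S=\mathrm{diag}\left(\frac{h_1(A)+\epsilon_1}{|a_{11}|},\dots,\frac{h_n(A)+\epsilon_n}{|a_{nn}|}\right)$$ has positive diagonal entries and $AS$ is strictly diagonally dominant by rows.
   Context: For a complex $n\times n$ matrix $A=(a_{ij})$ with $a_{ii}\ne 0$ for all $i$, define recursively $h_1(A):=\sum_{j\ne 1}|a_{1j}|$ and $h_i(A):=\sum_{j=1}^{i-1}|a_{ij}|\frac{h_j(A)}{|a_{jj}|}+\sum_{j=i+1}^{n}|a_{ij}|$ for $i=2,\dots,n$. $A$ is a Nekrasov matrix if $|a_{ii}|>h_i(A)$ for all $i\in\{1,\dots,n\}$. A matrix $B=(b_{ij})$ is strictly diagonally dominant by rows (SDD) if $|b_{ii}|>\sum_{j\ne i}|b_{ij}|$ for all $i$. *)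

From HB Require Import structures.
From mathcomp Require Import all_boot all_order all_algebra.
From mathcomp Require Import complex.
Set Implicit Arguments. Unset Strict Implicit. Unset Printing Implicit Defensive.
Import Order.TTheory GRing.Theory Num.Theory.
Local Open Scope ring_scope.

(* Complex numbers are R[i] for R a real closed field (R = the reals is the
   intended instance).  Indices are 0-based: row i : 'I_n is row i+1 of the paper. *)

Definition cabs (R : rcfType) (z : R[i]) : R := Num.sqrt (@complex.Re R z ^+ 2 + @complex.Im R z ^+ 2).

Definition aent (R : rcfType) (n : nat) (A : 'M[R[i]]_n) (i : nat) (j : 'I_n) : R[i] :=
  if insub i is Some i' then A i' j else 0.

(* given the list s = [h_0; ...; h_{i-1}], the value h_i *)
Definition hnext (R : rcfType) (n : nat) (A : 'M[R[i]]_n) (s : seq R) (i : nat) : R :=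
  \sum_(j < n | (j < i)%N) cabs (aent A i j) * s`_j / cabs (A j j)
  + \sum_(j < n | (i < j)%N) cabs (aent A i j).

Fixpoint hs (R : rcfType) (n : nat) (A : 'M[R[i]]_n) (k : nat) : seq R :=
  match k with
  | 0 => [::]
  | k'.+1 => rcons (hs A k') (hnext A (hs A k') k')
  end.

Definition h (R : rcfType) (n : nat) (A : 'M[R[i]]_n) (i : 'I_n) : R := (hs A n)`_i.

Definition nekrasov (R : rcfType) (n : nat) (A : 'M[R[i]]_n) : Prop :=
  (forall i : 'I_n, A i i != 0) /\ (forall i : 'I_n, h A i < cabs (A i i)).

Definition sdd (R : rcfType) (n : nat) (B : 'M[R[i]]_n) : Prop :=
  forall i : 'I_n, \sum_(j < n | j != i) cabs (B i j) < cabs (B i i).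

Definition admissible_eps (R : rcfType) (n : nat) (A : 'M[R[i]]_n) (eps : 'I_n -> R) : Prop :=
  forall i : 'I_n, 0 < eps i /\
    ((0 < i)%N ->
       eps i <= cabs (A i i) - h A i /\
       \sum_(j < n | (j < i)%N) cabs (A i j) * eps j / cabs (A j j) < eps i).

Definition sdiag (R : rcfType) (n : nat) (A : 'M[R[i]]_n) (eps : 'I_n -> R) (i : 'I_n) : R :=
  (h A i + eps i) / cabs (A i i).

Definition Smat (R : rcfType) (n : nat) (A : 'M[R[i]]_n) (eps : 'I_n -> R) : 'M[R[i]]_n :=
  diag_mx (\row_i ((sdiag A eps i)%:C)%C).

From mathcomp Require Import all_boot all_order all_algebra.
From mathcomp Require Import complex.
From mathcomp Require Import lra zify.
Import Order.TTheory GRing.Theory Num.Theory.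
Local Open Scope ring_scope.

(* Right multiplication by S scales column j by s_j = (h_j + eps_j)/|a_jj|, so
   the diagonal entry of row i of AS has modulus h_i + eps_i.  For j > 0 the
   bound eps_j <= |a_jj| - h_j gives s_j <= 1, so the entries right of the
   diagonal contribute at most sum_{j>i} |a_ij|, while those left of it split
   into sum_{j<i} |a_ij| h_j/|a_jj| and sum_{j<i} |a_ij| eps_j/|a_jj| < eps_i;
   the first two add up to h_i by the recursion.  Admissible eps exist:
   eps_i = (|a_ii| - h_i) t^(n-i) works for small t > 0, since the terms left
   of the diagonal carry at least one extra factor t. *)

Section Modulus.
Variable R : rcfType.

Lemma cabsE (z : R[i]) : cabs z = Normc.normc z.
Proof. by case: z. Qed.

Lemma cabs_ge0 (z : R[i]) : 0 <= cabs z.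
Proof. exact: sqrtr_ge0. Qed.

Lemma cabsM (z w : R[i]) : cabs (z * w) = cabs z * cabs w.
Proof. by rewrite !cabsE Normc.normcM. Qed.

Lemma cabs_real (r : R) : 0 <= r -> cabs (r%:C)%C = r.
Proof. by move=> r0; rewrite /cabs /= expr0n /= addr0 sqrtr_sqr ger0_norm. Qed.

End Modulus.

Lemma big_ord_neq_split {V : nmodType} {n : nat} (i : 'I_n) (F : 'I_n -> V) :
  \sum_(j < n | j != i) F j =
  \sum_(j < n | (j < i)%N) F j + \sum_(j < n | (i < j)%N) F j.
Proof.
rewrite (bigID (fun j : 'I_n => (j < i)%N)) /=; congr (_ + _); apply: eq_bigl => j.
  by rewrite andbC; case: ltnP => //= ji; rewrite neq_ltn ji.
by rewrite -leqNgt ltn_neqAle eq_sym.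
Qed.

Lemma ler_sum_term {R : numDomainType} {I : finType} (F : I -> R) (i : I) :
  (forall j, 0 <= F j) -> F i <= \sum_j F j.
Proof. by move=> F0; rewrite (bigD1 i) //= lerDl sumr_ge0. Qed.

Section NekrasovSums.
Context {R : rcfType} {n : nat} (A : 'M[R[i]]_n).

Lemma size_hs k : size (hs A k) = k.
Proof. by elim: k => //= k IH; rewrite size_rcons IH. Qed.

Lemma nth_hs_stable {k m j : nat} : (k <= m)%N -> (j < k)%N -> (hs A k)`_j = (hs A m)`_j.
Proof.
move=> km jk; elim: m km => [|m IH]; first by rewrite leqn0 => /eqP ->.
rewrite leq_eqVlt => /orP [/eqP -> //|]; rewrite ltnS => km.
by rewrite /= nth_rcons size_hs (leq_trans jk km) IH.
Qed.

Lemma hs_ge0 k j : 0 <= (hs A k)`_j.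
Proof.
elim: k j => [|k IH] j; first by rewrite nth_nil.
rewrite /= nth_rcons size_hs; case: ltnP => _; first exact: IH.
case: eqP => _ //; rewrite /hnext addr_ge0 ?sumr_ge0 // => l _.
  by rewrite divr_ge0 ?mulr_ge0 ?cabs_ge0.
exact: cabs_ge0.
Qed.

Lemma h_ge0 i : 0 <= h A i.
Proof. exact: hs_ge0. Qed.

Lemma hE (i : 'I_n) : h A i =
  \sum_(j < n | (j < i)%N) cabs (A i j) * h A j / cabs (A j j)
  + \sum_(j < n | (i < j)%N) cabs (A i j).
Proof.
have aentE j : aent A i j = A i j by rewrite /aent valK.
rewrite /h -(nth_hs_stable (ltn_ord i) (ltnSn i)) /= nth_rcons size_hs ltnn eqxx.
rewrite /hnext; congr (_ + _); apply: eq_bigr => j ji; rewrite aentE //.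
by rewrite (nth_hs_stable (ltnW (ltn_ord i)) ji).
Qed.

End NekrasovSums.

Section NekrasovScaling.
Variables (R : rcfType) (n : nat) (A : 'M[R[i]]_n).
Hypothesis nekA : nekrasov A.

Local Notation gap i := (cabs (A i i) - h A i).

Lemma cabs_diag_gt0 i : 0 < cabs (A i i).
Proof. exact: le_lt_trans (h_ge0 A i) (nekA.2 i). Qed.

Lemma nekrasov_gap_gt0 i : 0 < gap i.
Proof. by rewrite subr_gt0; case: nekA. Qed.

Section AdmissibleScaling.
Variable eps : 'I_n -> R.
Hypothesis epsA : admissible_eps A eps.

Lemma sdiag_gt0 i : 0 < sdiag A eps i.
Proof.
by rewrite divr_gt0 ?cabs_diag_gt0 // ltr_wpDl ?h_ge0 //; case: (epsA i).
Qed.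

Lemma sdiag_le1 (j : 'I_n) : (0 < j)%N -> sdiag A eps j <= 1.
Proof.
move=> j0; rewrite ler_pdivrMr ?cabs_diag_gt0 // mul1r -lerBrDl.
by case: (epsA j) => _ /(_ j0) [].
Qed.

Lemma cabs_mulmx_Smat i j :
  cabs ((A *m Smat A eps) i j) = cabs (A i j) * sdiag A eps j.
Proof. by rewrite mul_mx_diag !mxE cabsM cabs_real // ltW ?sdiag_gt0. Qed.

Lemma lower_eps_sum_lt (i : 'I_n) :
  \sum_(j < n | (j < i)%N) cabs (A i j) * eps j / cabs (A j j) < eps i.
Proof.
case: (posnP i) => [i0|]; last by case: (epsA i) => _ /[apply] [[]].
by rewrite big_pred0 => [|j]; [case: (epsA i) | rewrite i0].
Qed.

Lemma sdd_mulmx_Smat : sdd (A *m Smat A eps).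
Proof.
move=> i; rewrite !cabs_mulmx_Smat mulrCA mulfV ?mulr1 ?gt_eqF ?cabs_diag_gt0 //.
under eq_bigr do rewrite cabs_mulmx_Smat.
have upper_le : \sum_(j < n | (i < j)%N) cabs (A i j) * sdiag A eps j <=
                \sum_(j < n | (i < j)%N) cabs (A i j).
  apply: ler_sum => j ij; rewrite ler_piMr ?cabs_ge0 ?sdiag_le1 //.
  exact: leq_ltn_trans ij.
have lowerE : \sum_(j < n | (j < i)%N) cabs (A i j) * sdiag A eps j =
    \sum_(j < n | (j < i)%N) cabs (A i j) * h A j / cabs (A j j) +
    \sum_(j < n | (j < i)%N) cabs (A i j) * eps j / cabs (A j j).
  by rewrite -big_split; apply: eq_bigr => j _; rewrite mulrA mulrDr mulrDl.
rewrite big_ord_neq_split lowerE (hE A i).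
move: upper_le (lower_eps_sum_lt i); lra.
Qed.

End AdmissibleScaling.

Lemma geometric_eps_admissible (t : R) : 0 < t <= 1 ->
  (forall i : 'I_n, t * \sum_(j < n | (j < i)%N) cabs (A i j) < gap i) ->
  admissible_eps A (fun i => gap i * t ^+ (n - i)).
Proof.
move=> /andP[t0 t1] small i; split; first by rewrite mulr_gt0 ?nekrasov_gap_gt0 ?exprn_gt0.
move=> i0; split.
  by rewrite ler_piMr ?exprn_ile1 ?(ltW (nekrasov_gap_gt0 i)) ?(ltW t0).
have term_le (j : 'I_n) : (j < i)%N -> gap j * t ^+ (n - j) / cabs (A j j) <= t ^+ (n - i).+1.
  move=> ji; rewrite mulrAC; apply: le_trans (_ : t ^+ (n - j) <= _).
    rewrite ler_piMl ?exprn_ge0 ?(ltW t0) // ler_pdivrMr ?cabs_diag_gt0 // mul1r.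
    by rewrite gerBl h_ge0.
  by rewrite ler_wiXn2l ?(ltW t0) //; have := ltn_ord i; lia.
apply: le_lt_trans (_ : _ <= \sum_(j < n | (j < i)%N) cabs (A i j) * t ^+ (n - i).+1) _.
  by apply: ler_sum => j ji; rewrite -mulrA ler_wpM2l ?cabs_ge0 ?term_le.
by rewrite -mulr_suml exprS mulrA ltr_pM2r ?exprn_gt0 // mulrC.
Qed.

Lemma exists_admissible_eps : exists eps, admissible_eps A eps.
Proof.
pose row (i : 'I_n) := \sum_(j < n | (j < i)%N) cabs (A i j).
have row_ge0 i : 0 <= row i by rewrite sumr_ge0 // => j _; apply: cabs_ge0.
pose K := \sum_i row i.
have K_ge0 : 0 <= K by rewrite sumr_ge0.
pose m := \big[Order.min/1]_(i < n) gap i.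
have m_gt0 : 0 < m by apply/bigmin_gtP; split=> // i _; apply: nekrasov_gap_gt0.
have m_le1 : m <= 1 by apply: bigmin_le_id.
pose t := m / (K + 1).
have t_gt0 : 0 < t by rewrite divr_gt0 // ltr_wpDl.
have tK_lt_m : t * K < m by rewrite mulrAC ltr_pdivrMr ?ltr_wpDl //; nra.
exists (fun i => gap i * t ^+ (n - i)); apply: geometric_eps_admissible.
  by rewrite t_gt0 ler_pdivrMr ?ltr_wpDl //; nra.
move=> i; apply: lt_le_trans (bigmin_le 1 i (fun k => gap k)).
apply: le_lt_trans tK_lt_m.
by rewrite ler_wpM2l ?(ltW t_gt0) // (ler_sum_term row).
Qed.

End NekrasovScaling.

Theorem theorem2p1 (R : rcfType) (n : nat) (A : 'M[R[i]]_n) :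
  nekrasov A ->
  (exists eps : 'I_n -> R, admissible_eps A eps) /\
  (forall eps : 'I_n -> R, admissible_eps A eps ->
     (forall i : 'I_n, 0 < sdiag A eps i) /\ sdd (A *m Smat A eps)).
Proof.
move=> nekA; split; first exact: exists_admissible_eps.
by move=> eps epsA; split; [exact: sdiag_gt0 | exact: sdd_mulmx_Smat].
Qed.
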